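(* There are infinitely many polynomials $f\in\mathbb Z[x]$, each irreducible over $\mathbb Q$, which factorise over $\mathbb C$ as $f=(x-\alpha)(x-\overline{\alpha})(x-\alpha^{-1})(x-\overline{\alpha}^{-1})$ with $\alpha=\lambda e^{2\pi i\theta}$, where $\lambda\in\mathbb R$, $\lambda>1$, and $\theta\in(0,1/2)$ is irrational. *)

From Stdlib Require Import Reals ZArith.
From HB Require Import structures.
From mathcomp Require Import all_boot all_order all_algebra.

Set Implicit Arguments.
Unset Strict Implicit.
Unset Printing Implicit Defensive.

Definition Cplx : Type := (R * R)%type.
Definition Cof (r : R) : Cplx := (r, R0).
Definition Cadd (z w : Cplx) : Cplx := (Rplus z.1 w.1, Rplus z.2 w.2).
Definition Csub (z w : Cplx) : Cplx := (Rminus z.1 w.1, Rminus z.2 w.2).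
Definition Cmul (z w : Cplx) : Cplx :=
  (Rminus (Rmult z.1 w.1) (Rmult z.2 w.2), Rplus (Rmult z.1 w.2) (Rmult z.2 w.1)).
Definition Cconj (z : Cplx) : Cplx := (z.1, Ropp z.2).
Definition Cnorm2 (z : Cplx) : R := Rplus (Rmult z.1 z.1) (Rmult z.2 z.2).
Definition Cinv (z : Cplx) : Cplx :=
  (Rdiv z.1 (Cnorm2 z), Rdiv (Ropp z.2) (Cnorm2 z)).
Definition Cexp2pii (theta : R) : Cplx :=
  (cos (Rmult (Rmult (IZR (Zpos 2)) PI) theta), sin (Rmult (Rmult 2 PI) theta)).

Definition int_to_R (a : int) : R :=
  match a with
  | Posz n => INR n
  | Negz n => Ropp (INR n.+1)
  end.

Definition Ceval (f : {poly int}) (z : Cplx) : Cplx :=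
  foldr (fun a acc => Cadd (Cof (int_to_R a)) (Cmul z acc)) (Cof R0) (polyseq f).

Definition irrational (x : R) : Prop :=
  ~ exists (p q : Z), q <> Z0 /\ x = Rdiv (IZR p) (IZR q).

Definition irreducible_over_Q (f : {poly int}) : Prop :=
  irreducible_poly (map_poly (intr : int -> rat) f).

(* f = (x - a)(x - conj a)(x - a^-1)(x - conj(a)^-1) as polynomials over C,
   stated as equality of the polynomial functions on C (equivalent, C infinite). *)
Definition factors_as (f : {poly int}) (a : Cplx) : Prop :=
  forall z : Cplx,
    Ceval f z =
    Cmul (Cmul (Csub z a) (Csub z (Cconj a)))
         (Cmul (Csub z (Cinv a)) (Csub z (Cinv (Cconj a)))).

Definition good_poly (f : {poly int}) : Prop :=
  irreducible_over_Q f /\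
  exists (lambda theta : R),
    Rlt R1 lambda /\ Rlt R0 theta /\ Rlt theta (Rdiv R1 (IZR (Zpos 2))) /\ irrational theta /\
    factors_as f (Cmul (Cof lambda) (Cexp2pii theta)).

(* Take f_n = x^4 + x^3 + n x^2 + x + 1 with n >= 3.  For a = lam e^{i phi}, multiplying out
   (x - a)(x - conj a)(x - 1/a)(x - 1/conj a) gives a palindromic quartic with coefficients
   -2 cos phi (lam + 1/lam) and lam^2 + lam^-2 + 4 cos^2 phi; taking L = lam + 1/lam with
   L^2 + L^-2 = n + 2 and cos phi = -1/(2L) yields f_n.  Then 2 cos 2phi and lam^2 + lam^-2 are
   the two roots of y^2 - (n-2) y + (1-2n), whose discriminant n^2 + 4n lies strictly between
   (n+1)^2 and (n+2)^2 and so is not a rational square.  If phi/(2 pi) were rational,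
   2 cos 2m phi = 2 for some m >= 1 while lam^2m + lam^-2m > 2; as both are the same integer
   linear form evaluated at the respective root, the form is non-constant and the root
   rational, a contradiction.  Over Q, f_n > 0 excludes linear factors, and comparing
   coefficients of two monic quadratic factors again makes n^2 + 4n a rational square. *)

From Stdlib Require Import Reals ZArith Lra Lia.
From HB Require Import structures.
From mathcomp Require all_boot all_order all_algebra ring lra zify.

(* Descent: if P/Q = sqrt D with kQ < P < (k+1)Q, then (DQ - kP)/(P - kQ) is another
   representation of sqrt D with a smaller denominator. *)
Lemma sqr_neq_mul_sqr (D k P Q : nat) :
  k * k < D < (k + 1) * (k + 1) -> 0 < Q -> P * P <> D * (Q * Q).
Proof.
  intros HD. revert P. induction Q as [Q IH] using lt_wf_ind. intros P HQ HPQ.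
  assert (Hlo : k * Q < P) by nia.
  assert (Hhi : P < (k + 1) * Q) by nia.
  assert (HDQ : k * P < D * Q) by nia.
  apply (IH (P - k * Q) ltac:(lia) (D * Q - k * P) ltac:(lia)).
  nia.
Qed.

Local Open Scope R_scope.

Definition Cquartic (z : Cplx) (c0 c1 c2 c3 c4 : R) : Cplx :=
  Cadd (Cof c0) (Cmul z (Cadd (Cof c1) (Cmul z (Cadd (Cof c2) (Cmul z
   (Cadd (Cof c3) (Cmul z (Cadd (Cof c4) (Cmul z (Cof R0)))))))))).

Definition Cquadratic (z : Cplx) (c0 c1 : R) : Cplx :=
  Cadd (Cmul z z) (Cadd (Cmul (Cof c1) z) (Cof c0)).

Lemma Cmul_sub_conj (z : Cplx) (x y : R) :
  Cmul (Csub z (x, y)) (Csub z (Cconj (x, y))) = Cquadratic z (x * x + y * y) (-2 * x).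
Proof. destruct z; unfold Cmul, Csub, Cconj, Cquadratic, Cadd, Cof; simpl; f_equal; ring. Qed.

Lemma Cmul_quadratic (z : Cplx) (c0 c1 d0 d1 : R) :
  Cmul (Cquadratic z c0 c1) (Cquadratic z d0 d1) =
  Cquartic z (c0 * d0) (c0 * d1 + c1 * d0) (c0 + d0 + c1 * d1) (c1 + d1) 1.
Proof. destruct z; unfold Cmul, Cquartic, Cquadratic, Cadd, Cof; simpl; f_equal; ring. Qed.

Lemma Cinv_polar (lam co si : R) : lam <> 0 -> co * co + si * si = 1 ->
  Cinv (lam * co, lam * si) = (co / lam, - (si / lam)).
Proof.
  intros Hlam Hcs. unfold Cinv, Cnorm2; simpl.
  replace (lam * co * (lam * co) + lam * si * (lam * si)) with (lam * lam)
    by (rewrite <- (Rmult_1_r (lam * lam)), <- Hcs; ring).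
  f_equal; field; exact Hlam.
Qed.

Lemma Cinv_Cconj (z : Cplx) : Cnorm2 z <> 0 -> Cinv (Cconj z) = Cconj (Cinv z).
Proof. destruct z; unfold Cinv, Cconj, Cnorm2; simpl; intro; f_equal; field; lra. Qed.

Lemma quartic_of_polar_roots (lam co si : R) (z : Cplx) :
  lam <> 0 -> co * co + si * si = 1 ->
  let a := Cmul (Cof lam) (co, si) in
  Cmul (Cmul (Csub z a) (Csub z (Cconj a))) (Cmul (Csub z (Cinv a)) (Csub z (Cinv (Cconj a))))
  = Cquartic z 1 (-2 * co * (lam + / lam)) (lam * lam + / (lam * lam) + 4 * co * co)
      (-2 * co * (lam + / lam)) 1.
Proof.
  intros Hlam Hcs a.
  assert (Ha : a = (lam * co, lam * si)) by (unfold a, Cmul, Cof; simpl; f_equal; ring).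
  assert (Hnorm : lam * co * (lam * co) + lam * si * (lam * si) = lam * lam)
    by (rewrite <- (Rmult_1_r (lam * lam)), <- Hcs; ring).
  assert (Hnorm_inv : co / lam * (co / lam) + - (si / lam) * - (si / lam) = / (lam * lam))
    by (rewrite <- (Rmult_1_l (/ (lam * lam))), <- Hcs; field; exact Hlam).
  rewrite Cinv_Cconj by (rewrite Ha; unfold Cnorm2; simpl; rewrite Hnorm; nra).
  rewrite Ha, Cinv_polar, !Cmul_sub_conj, Cmul_quadratic, Hnorm, Hnorm_inv by assumption.
  f_equal; field; exact Hlam.
Qed.

Lemma cos_2PI_mul_IZR (k : Z) : cos (2 * PI * IZR k) = 1.
Proof.
  assert (Habs : cos (2 * PI * IZR k) = cos (2 * PI * IZR (Z.abs k))).
  { destruct (Z.abs_spec k) as [[_ ->] | [_ ->]]; [reflexivity|].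
    rewrite opp_IZR, Ropp_mult_distr_r_reverse, cos_neg. reflexivity. }
  rewrite Habs, <- (Z2Nat.id (Z.abs k)), <- INR_IZR_INZ by lia.
  replace (2 * PI * INR _) with (0 + 2 * INR (Z.to_nat (Z.abs k)) * PI) by ring.
  rewrite cos_period. apply cos_0.
Qed.

Lemma cos_mul_rec (psi : R) (k : nat) :
  2 * cos (INR (S (S k)) * psi) = 2 * cos psi * (2 * cos (INR (S k) * psi)) - 2 * cos (INR k * psi).
Proof.
  rewrite !S_INR.
  replace ((INR k + 1 + 1) * psi) with ((INR k + 1) * psi + psi) by ring.
  replace (INR k * psi) with ((INR k + 1) * psi - psi) by ring.
  rewrite cos_plus, cos_minus. ring.
Qed.

Lemma pow_add_pow_inv_rec (x : R) (k : nat) : x <> 0 ->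
  x ^ S (S k) + / x ^ S (S k) = (x + / x) * (x ^ S k + / x ^ S k) - (x ^ k + / x ^ k).
Proof. intro Hx. simpl. field. split; [apply pow_nonzero|]; auto. Qed.

(* If y^2 = s y - t and w_(k+2) = y w_(k+1) - w_k with w_0 = 2, w_1 = y, then
   w_m = a y + b where (a, b) is the first component of [lucas_coef s t m]; the second
   component is the same for w_(m+1). *)
Fixpoint lucas_coef (s t : Z) (m : nat) : (Z * Z) * (Z * Z) :=
  match m with
  | O => ((0, 2), (1, 0))%Z
  | S k => let '(c, c') := lucas_coef s t k in
           (c', (s * fst c' + snd c' - fst c, - t * fst c' - snd c))%Z
  end.

Lemma lucas_coefP (s t : Z) (y : R) (w : nat -> R) :
  y * y = IZR s * y - IZR t -> w O = 2 -> w 1%nat = y ->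
  (forall k, w (S (S k)) = y * w (S k) - w k) ->
  forall m, w m = IZR (fst (fst (lucas_coef s t m))) * y + IZR (snd (fst (lucas_coef s t m))).
Proof.
  intros Hy H0 H1 Hrec m.
  enough (H : w m = IZR (fst (fst (lucas_coef s t m))) * y + IZR (snd (fst (lucas_coef s t m)))
           /\ w (S m) = IZR (fst (snd (lucas_coef s t m))) * y + IZR (snd (snd (lucas_coef s t m))))
    by apply H.
  induction m as [|m [IH0 IH1]]; simpl.
  - rewrite H0, H1. split; ring.
  - destruct (lucas_coef s t m) as [[a0 b0] [a1 b1]]; simpl in *.
    split; [exact IH1|].
    rewrite Hrec, IH0, IH1, minus_IZR, plus_IZR, minus_IZR, !mult_IZR, !opp_IZR.
    replace (y * (IZR a1 * y + IZR b1)) with (IZR a1 * (y * y) + IZR b1 * y) by ring.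
    rewrite Hy. ring.
Qed.

Lemma sqr_discr_of_rational_root (s t a b c : Z) (y : R) :
  y * y = IZR s * y - IZR t -> IZR a * y + IZR b = IZR c ->
  ((2 * (c - b) - s * a) * (2 * (c - b) - s * a) = (s * s - 4 * t) * (a * a))%Z.
Proof.
  intros Hy Hc. apply eq_IZR.
  repeat rewrite ?mult_IZR, ?minus_IZR. rewrite <- Hc.
  replace (IZR s * IZR s - 4 * IZR t) with (IZR s * IZR s - 4 * (IZR s * y - y * y))
    by (rewrite Hy; ring).
  ring.
Qed.

Lemma irrational_of_conjugate_traces (s t : Z) (psi X : R) :
  (forall K a : Z, a <> 0%Z -> (K * K <> (s * s - 4 * t) * (a * a))%Z) ->
  1 < X ->
  2 * cos psi * (2 * cos psi) = IZR s * (2 * cos psi) - IZR t ->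
  (X + / X) * (X + / X) = IZR s * (X + / X) - IZR t ->
  irrational (psi / (2 * PI)).
Proof.
  intros Hdisc HX Hu Hv [p [q [Hq Hpq]]].
  assert (HPI := PI_RGT_0).
  set (m := Z.to_nat (q * q)).
  assert (Hm : (1 <= m)%nat) by (unfold m; lia).
  pose proof (lucas_coefP s t (2 * cos psi) (fun k => 2 * cos (INR k * psi)) Hu
                ltac:(simpl; rewrite Rmult_0_l, cos_0; ring) ltac:(simpl; rewrite Rmult_1_l; ring)
                (cos_mul_rec psi) m) as Hum.
  pose proof (lucas_coefP s t (X + / X) (fun k => X ^ k + / X ^ k) Hv
                ltac:(simpl; field) ltac:(simpl; field; lra)
                (fun k => pow_add_pow_inv_rec X k ltac:(lra)) m) as Hvm.
  simpl in Hum, Hvm.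
  destruct (fst (lucas_coef s t m)) as [a b].
  assert (Hperiod : cos (INR m * psi) = 1).
  { replace (INR m * psi) with (2 * PI * IZR (p * q)).
    - apply cos_2PI_mul_IZR.
    - unfold m. rewrite INR_IZR_INZ, Z2Nat.id, mult_IZR, mult_IZR by nia.
      apply (Rmult_eq_reg_r (/ (2 * PI))); [|apply Rinv_neq_0_compat; lra].
      replace (IZR q * IZR q * psi * / (2 * PI)) with (IZR q * IZR q * (psi / (2 * PI))) by (unfold Rdiv; ring).
      rewrite Hpq. field. split; [apply not_0_IZR; exact Hq | lra]. }
  assert (HXm : 2 < X ^ m + / X ^ m).
  { assert (1 < X ^ m) by (apply Rlt_pow_R1; [lra | lia]).
    assert (X ^ m * / X ^ m = 1) by (field; lra).
    nra. }
  rewrite Hperiod in Hum.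
  destruct (Z.eq_dec a 0) as [-> | Ha]; simpl in Hum, Hvm.
  - lra.
  - apply (Hdisc (2 * (2 - b) - s * a)%Z a Ha).
    apply (sqr_discr_of_rational_root s t a b 2 (2 * cos psi) Hu). lra.
Qed.

Lemma irrational_of_double (x : R) : irrational (2 * x) -> irrational x.
Proof.
  intros H [p [q [Hq Hx]]]. apply H. exists (2 * p)%Z, q. split; [exact Hq|].
  rewrite Hx, mult_IZR. field. apply not_0_IZR. exact Hq.
Qed.

Lemma exists_gt1_add_inv (c : R) : 2 < c -> exists x, 1 < x /\ x + / x = c.
Proof.
  intro Hc. set (r := sqrt (c * c - 4)).
  assert (Hr : r * r = c * c - 4) by (apply sqrt_sqrt; nra).
  assert (Hr0 : 0 <= r) by apply sqrt_pos.
  exists ((c + r) / 2). split; [lra|].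
  replace (/ ((c + r) / 2)) with ((c - r) / 2); [lra|].
  apply (Rmult_eq_reg_l ((c + r) / 2)); [|lra].
  rewrite Rinv_r by lra. nra.
Qed.

Lemma sub2_sqr_of_add_inv (x c : R) : x <> 0 -> x + / x = c + 2 ->
  (x - 2) * (x - 2) = (c - 2) * (x - 2) - (1 - 2 * c).
Proof.
  intros Hx Hc. replace c with (x + / x - 2) by lra. field. exact Hx.
Qed.

Lemma disc_not_rational_sqr (n : nat) : (1 <= n)%nat ->
  let s := (Z.of_nat n - 2)%Z in let t := (1 - 2 * Z.of_nat n)%Z in
  forall K a : Z, a <> 0%Z -> (K * K <> (s * s - 4 * t) * (a * a))%Z.
Proof.
  intros Hn s t K a Ha HK.
  apply (sqr_neq_mul_sqr (n * n + 4 * n) (n + 1) (Z.abs_nat K) (Z.abs_nat a)); [nia | lia |].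
  unfold s, t in HK. nia.
Qed.

Lemma exists_angle_of_cos (co : R) : -1 < co < 1 ->
  exists theta, 0 < theta < 1 / 2 /\ cos (2 * PI * theta) = co.
Proof.
  intro Hco. assert (HPI := PI_RGT_0).
  assert (Hacos : 0 < acos co < PI) by (apply acos_bound_lt; exact Hco).
  exists (acos co / (2 * PI)). split.
  - split; [apply Rdiv_lt_0_compat | apply (Rmult_lt_reg_l (2 * PI))]; try lra.
    replace (2 * PI * (acos co / (2 * PI))) with (acos co) by (field; lra). lra.
  - replace (2 * PI * (acos co / (2 * PI))) with (acos co) by (field; lra).
    apply cos_acos. lra.
Qed.

Lemma polar_factorisation (n : nat) : (3 <= n)%nat -> exists lam theta : R,
  1 < lam /\ 0 < theta /\ theta < 1 / 2 /\ irrational theta /\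
  forall z, let a := Cmul (Cof lam) (Cexp2pii theta) in
    Cmul (Cmul (Csub z a) (Csub z (Cconj a))) (Cmul (Csub z (Cinv a)) (Csub z (Cinv (Cconj a))))
    = Cquartic z 1 1 (INR n) 1 1.
Proof.
  intros Hn.
  assert (Hn3 : 3 <= INR n) by (replace 3 with (INR 3) by (simpl; ring); apply le_INR; exact Hn).
  destruct (exists_gt1_add_inv (INR n + 2)) as [t [Ht Htn]]; [lra|].
  assert (Ht4 : 4 < t).
  { assert (/ t < 1) by (rewrite <- Rinv_1; apply Rinv_lt_contravar; lra). lra. }
  set (L := sqrt t).
  assert (HL : L * L = t) by (apply sqrt_sqrt; lra).
  assert (HL2 : 2 < L) by (pose proof (sqrt_pos t); fold L in H; nra).
  destruct (exists_gt1_add_inv L HL2) as [lam [Hlam HlamL]].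
  set (co := - / (2 * L)).
  destruct (exists_angle_of_cos co) as [theta [Htheta Hcos]].
  { assert (0 < / (2 * L) < 1).
    { split; [apply Rinv_0_lt_compat; lra|]. rewrite <- Rinv_1. apply Rinv_lt_contravar; lra. }
    unfold co. lra. }
  exists lam, theta. repeat split; try lra.
  - apply irrational_of_double.
    replace (2 * theta) with (2 * (2 * PI * theta) / (2 * PI)) by (field; apply PI_neq0).
    apply (irrational_of_conjugate_traces _ _ _ (lam * lam) (disc_not_rational_sqr n ltac:(lia)));
      [nra | |]; rewrite minus_IZR, minus_IZR, mult_IZR, <- INR_IZR_INZ.
    + replace (2 * cos (2 * (2 * PI * theta))) with (/ t - 2).
      * apply sub2_sqr_of_add_inv; [apply Rinv_neq_0_compat; lra | rewrite Rinv_inv; lra].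
      * rewrite cos_2a_cos, Hcos. unfold co. rewrite <- HL. field. lra.
    + replace (lam * lam + / (lam * lam)) with (t - 2)
        by (rewrite <- HL, <- HlamL; field; lra).
      apply sub2_sqr_of_add_inv; lra.
  - intro z. cbv zeta.
    assert (Hcs : co * co + sin (2 * PI * theta) * sin (2 * PI * theta) = 1)
      by (rewrite <- Hcos, Rplus_comm; apply sin2_cos2).
    unfold Cexp2pii. rewrite Hcos, quartic_of_polar_roots, HlamL by lra.
    replace (INR n) with (L * L + / (L * L) - 2) by (rewrite HL; lra).
    replace (lam * lam + / (lam * lam)) with (L * L - 2) by (rewrite <- HlamL; field; lra).
    unfold co. f_equal; field; lra.
Qed.

Close Scope R_scope.
(* Imported only now: mathcomp's [lra]/[ring] and its [%Z] scope shadow those used above. *)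
Import all_boot all_order all_algebra ring lra zify.
Import Order.TTheory GRing.Theory Num.Theory.
Local Open Scope ring_scope.

Lemma rat_sqr_neq (D k : nat) (z : rat) : (k * k < D < (k + 1) * (k + 1))%N -> z * z != D%:R.
Proof.
  move=> HD; apply/eqP => Hz.
  have Hden : 0 < denq z := denq_gt0 z.
  have E : numq z * numq z = D%:Z * (denq z * denq z).
    apply: (@intr_inj rat); rewrite !intrM numqE -[D%:Z%:~R]/(D%:R) -Hz; ring.
  apply: (sqr_neq_mul_sqr D k `|numq z| `|denq z|); lia.
Qed.

Lemma quartic_gt0 {R : realFieldType} (c x : R) : 3 <= c ->
  0 < x ^+ 4 + x ^+ 3 + c * x ^+ 2 + x + 1.
Proof.
  move=> Hc.
  have -> : x ^+ 4 + x ^+ 3 + c * x ^+ 2 + x + 1 =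
      (x ^+ 2 + x / 2) ^+ 2 + (c - 3) * x ^+ 2 + 11 / 4 * (x + 2 / 11) ^+ 2 + 10 / 11 by field.
  have := sqr_ge0 (x ^+ 2 + x / 2); have := sqr_ge0 (x + 2 / 11).
  have : 0 <= (c - 3) * x ^+ 2 by rewrite mulr_ge0 ?sqr_ge0 ?subr_ge0.
  lra.
Qed.

Lemma no_quadratic_split (n : nat) (a b c d : rat) : (3 <= n)%N ->
  a + c = 1 -> b + d + a * c = n%:R -> a * d + b * c = 1 -> b * d = 1 -> False.
Proof.
  move=> Hn Hac Hn2 Had Hbd.
  have H3 : (3 : rat) <= n%:R by rewrite (ler_nat _ 3 n).
  have Ec : c = 1 - a by lra.
  subst c; clear Hac.
  have [Ebd | Nbd] := eqVneq b d.
  - subst d; have Hb : b = 1 by rewrite -Had; ring.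
    rewrite Hb in Hn2; have := sqr_ge0 (2 * a - 1); nra.
  - set w := b + d.
    have Hdb2 : (d - b) ^+ 2 = (w - 2) * (w + 2).
      by rewrite /w; transitivity ((b + d) ^+ 2 - 4 * (b * d)); [ring | rewrite Hbd; ring].
    have Ha : a * (d - b) = 1 - b by rewrite -Had; ring.
    have Hc : (1 - a) * (d - b) = d - 1 by rewrite mulrBl mul1r Ha; ring.
    have Hw : (n%:R - w) * ((w - 2) * (w + 2)) = w - 2.
      rewrite -Hdb2 -Hn2 /w.
      transitivity ((a * (d - b)) * ((1 - a) * (d - b))); first by ring.
      by rewrite Ha Hc; transitivity (b + d - 1 - b * d); [ring | rewrite Hbd; ring].
    have /eqP : (w - 2) * ((n%:R - w) * (w + 2) - 1) = 0 by lra.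
    rewrite mulf_eq0 => /orP [/eqP Hw2 | /eqP Hroot].
    + move: Hdb2; rewrite Hw2 mul0r => /eqP.
      by rewrite sqrf_eq0 subr_eq0 eq_sym (negbTE Nbd).
    + apply: (elimN eqP (rat_sqr_neq (n * n + 4 * n) (n + 1) (2 * w + 2 - n%:R) _)); first by lia.
      rewrite natrD !natrM; lra.
Qed.

Definition quartic (n : nat) : {poly int} := Poly [:: 1; 1; n%:Z; 1; 1].

Definition quarticQ (n : nat) : {poly rat} := map_poly intr (quartic n).

Lemma quarticE n : quartic n = [:: 1; 1; n%:Z; 1; 1] :> seq int.
Proof. by rewrite /quartic (PolyK (c := 0)) ?oner_neq0. Qed.

Lemma quarticQE n : quarticQ n = Poly [:: 1; 1; n%:R; 1; 1].
Proof. by rewrite /quarticQ map_polyE quarticE /= !rmorph1. Qed.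

Lemma size_quarticQ n : size (quarticQ n) = 5%N.
Proof. by rewrite quarticQE (PolyK (c := 0)) ?oner_neq0. Qed.

Lemma coef_quarticQ n i : (quarticQ n)`_i = [:: 1; 1; n%:R; 1; 1]`_i.
Proof. by rewrite quarticQE coef_Poly. Qed.

Lemma horner_quarticQ n x : (quarticQ n).[x] = x ^+ 4 + x ^+ 3 + n%:R * x ^+ 2 + x + 1.
Proof. rewrite quarticQE horner_Poly /=; ring. Qed.

Lemma quarticQ_no_linear_factor n (p : {poly rat}) : (3 <= n)%N -> size p = 2%N -> ~~ (p %| quarticQ n).
Proof.
  move=> Hn Hp; apply/negP => /divpK Hdiv.
  have [x /rootP Hx] := poly2_root Hp.
  have := quartic_gt0 (n%:R) x ltac:(by rewrite (ler_nat _ 3 n)).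
  by rewrite -horner_quarticQ -Hdiv hornerM Hx mulr0 ltxx.
Qed.

Lemma quarticQ_neq_mul_quadratic n (p q : {poly rat}) : (3 <= n)%N ->
  (size p <= 3)%N -> (size q <= 3)%N -> quarticQ n != p * q.
Proof.
  move=> Hn Hp Hq; apply/eqP => Hpq.
  have C i : (quarticQ n)`_i = (p * q)`_i by rewrite Hpq.
  have E0 := C 0%N; have E1 := C 1%N; have E2 := C 2%N; have E3 := C 3%N; have E4 := C 4%N.
  rewrite !coef_quarticQ !coefM /= in E0 E1 E2 E3 E4.
  rewrite !big_ord_recr !big_ord0 /= ?subSS ?subn0 ?add0r in E0 E1 E2 E3 E4.
  have hi (r : {poly rat}) j : (size r <= 3)%N -> (3 <= j)%N -> r`_j = 0.
    by move=> Hr Hj; apply: nth_default; apply: leq_trans Hr Hj.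
  rewrite (hi p 3%N) // (hi p 4%N) // (hi q 3%N) // (hi q 4%N) // ?mul0r ?mulr0 ?addr0 ?add0r in E3 E4.
  move: (p`_0) (p`_1) (p`_2) (q`_0) (q`_1) (q`_2) E0 E1 E2 E3 E4 => p0 p1 p2 q0 q1 q2 E0 E1 E2 E3 E4.
  have p2n : p2 != 0 by apply: contra_eq_neq E4 => ->; rewrite mul0r oner_neq0.
  have p0n : p0 != 0 by apply: contra_eq_neq E0 => ->; rewrite mul0r oner_neq0.
  have q2E : q2 = p2^-1 by apply: (mulfI p2n); rewrite -E4 mulfV.
  have q0E : q0 = p0^-1 by apply: (mulfI p0n); rewrite -E0 mulfV.
  rewrite {}q2E {}q0E in E1 E2 E3.
  (* the monic factors (x^2 + a x + b)(x^2 + c x + d) are p / p2 and q * p2 *)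
  apply: (no_quadratic_split n (p1 / p2) (p0 / p2) (q1 * p2) (p2 / p0) Hn).
  - by rewrite E3; field.
  - by rewrite E2; field; apply/andP.
  - by rewrite E1; field; apply/andP.
  - by field; apply/andP.
Qed.

Lemma quarticQ_irreducible n : (3 <= n)%N -> irreducible_poly (quarticQ n).
Proof.
  move=> Hn; split=> [|q Hq1 Hdvd]; first by rewrite size_quarticQ.
  have F0 : quarticQ n != 0 by rewrite -size_poly_eq0 size_quarticQ.
  have Hqr : quarticQ n = quarticQ n %/ q * q by rewrite divpK.
  set r := quarticQ n %/ q in Hqr.
  have r0 : r != 0 by apply: contra_neq F0; rewrite Hqr => ->; rewrite mul0r.
  have q0 : q != 0 by apply: contra_neq F0; rewrite Hqr => ->; rewrite mulr0.
  have Hsz : (size r + size q = 6)%N.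
    have : size (r * q) = 5%N by rewrite -Hqr size_quarticQ.
    by rewrite size_mul //; case: (size r + size q)%N => //= k ->.
  have Hr : r %| quarticQ n by rewrite Hqr dvdp_mulr.
  rewrite -dvdp_size_eqp // size_quarticQ.
  case: (ltngtP (size q) 3) => [Hq3 | Hq3 | Hq3].
  - have Hq2 : size q = 2%N by move: q0 Hq1; rewrite -size_poly_gt0; lia.
    by move: (quarticQ_no_linear_factor n q Hn Hq2); rewrite Hdvd.
  - have [Hq5 | Hq5] := eqVneq (size q) 5%N; first by [].
    have Hr2 : size r = 2%N by move: r0; rewrite -size_poly_gt0; lia.
    by move: (quarticQ_no_linear_factor n r Hn Hr2); rewrite Hr.
  - have Hr3 : (size r <= 3)%N by lia.
    by move: (quarticQ_neq_mul_quadratic n r q Hn Hr3 (eq_leq Hq3)); rewrite -Hqr eqxx.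
Qed.

Lemma coef2_quartic n : (quartic n)`_2 = n%:Z.
Proof. by rewrite quarticE. Qed.

Theorem lemma2p3 :
  forall s : seq {poly int}, exists f : {poly int}, f \notin s /\ good_poly f.
Proof.
  move=> s; set n := (\max_(p <- s) absz (p`_2)%R + 3)%N.
  exists (quartic n); split.
  - apply/negP => Hin.
    have := @leq_bigmax_seq _ s xpredT (fun p => absz (p`_2)%R) _ Hin isT.
    by rewrite coef2_quartic /n; set M := \max_(_ <- _) _; lia.
  - split; first by apply: quarticQ_irreducible; lia.
    have [lam [theta [Hlam [Hth0 [Hth1 [Hirr Hfac]]]]]] := polar_factorisation n ltac:(lia).
    exists lam, theta; do 4!split => //.
    by move=> z; rewrite Hfac /Ceval quarticE.
Qed.
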